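(* Let $G$ be a connected graph in $\mathcal{C}$ and $C$ an induced $C_5$ in $G$. Then $R$ is a clique, and every vertex of $R$ is adjacent to every vertex of $X$.
   Context: $\mathcal{C}=\mathrm{Free}(\text{claw}, 4K_1, \text{5-wheel}, C_5\text{-twin}, P_5\text{-twin}, K_5-e)$, where $\mathrm{Free}(L)$ is the class of graphs with no induced subgraph isomorphic to a member of $L$; the claw is $K_{1,3}$; $4K_1$ is the edgeless graph on 4 vertices; the 5-wheel is $C_5$ plus a vertex adjacent to all five cycle vertices; the $C_5$-twin is $C_5$ plus a new vertex adjacent to one cycle vertex $v$ and both cycle-neighbours of $v$; the $P_5$-twin is a path $p_1p_2p_3p_4p_5$ plus a new vertex adjacent to exactly $p_2,p_3,p_4$; $K_5-e$ is $K_5$ minus one edge. Given an induced cycle $C$ of length 5 with vertices $0,\dots,4$ in cyclic order (indices taken mod 5): $R$ is the set of vertices outside $C$ with no neighbour in $C$; $X_j$ is the set of vertices outside $C$ whose neighbourhood in $C$ is exactly $\{j,j+1\}$; $Y_j$ is the set of vertices outside $C$ whose neighbourhood in $C$ is exactly $\{j,j+1,j+2,j+3\}$; $X=\bigcup_j X_j$, $Y=\bigcup_j Y_j$. *)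

From mathcomp Require Import all_boot.
Set Implicit Arguments. Unset Strict Implicit. Unset Printing Implicit Defensive.

Definition simple_graph (T : finType) (e : rel T) : Prop :=
  symmetric e /\ irreflexive e.

Definition has_induced (T : finType) (e : rel T) (n : nat) (H : rel 'I_n) : Prop :=
  exists f : 'I_n -> T, injective f /\ forall i j, e (f i) (f j) = H i j.

Definition c5adj (i j : nat) : bool :=
  (j == (i.+1) %% 5) || (i == (j.+1) %% 5).

Definition claw : rel 'I_4 := fun i j =>
  (i != j) && ((val i == 0) || (val j == 0)).
Definition fourK1 : rel 'I_4 := fun _ _ => false.
Definition wheel5 : rel 'I_6 := fun i j =>
  if (val i < 5) && (val j < 5) then c5adj i j
  else (i != j).
Definition c5twin : rel 'I_6 := fun i j =>
  if (val i < 5) && (val j < 5) then c5adj i j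
  else if val i == 5 then (val j \in [:: 4; 0; 1])
  else (val i \in [:: 4; 0; 1]).
Definition p5twin : rel 'I_6 := fun i j =>
  if (val i < 5) && (val j < 5) then (val j == (val i).+1) || (val i == (val j).+1)
  else if val i == 5 then (val j \in [:: 1; 2; 3])
  else (val i \in [:: 1; 2; 3]).
Definition k5e : rel 'I_5 := fun i j =>
  (i != j) && ~~ ((val i <= 1) && (val j <= 1)).

Definition in_class (T : finType) (e : rel T) : Prop :=
  simple_graph e /\
  ~ has_induced e claw /\ ~ has_induced e fourK1 /\ ~ has_induced e wheel5 /\
  ~ has_induced e c5twin /\ ~ has_induced e p5twin /\ ~ has_induced e k5e.

Definition connected_graph (T : finType) (e : rel T) : Prop :=
  forall x y : T, connect e x y.

Definition induced_C5 (T : finType) (e : rel T) (c : 'I_5 -> T) : Prop :=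
  injective c /\ forall i j : 'I_5, e (c i) (c j) = c5adj i j.

Definition outside (T : finType) (c : 'I_5 -> T) (v : T) : bool :=
  [forall i, c i != v].

Definition setRC5 (T : finType) (e : rel T) (c : 'I_5 -> T) : {set T} :=
  [set v | outside c v & [forall i, ~~ e v (c i)]].

Definition setX_j (T : finType) (e : rel T) (c : 'I_5 -> T) (j : 'I_5) : {set T} :=
  [set v | outside c v &
     [forall i : 'I_5, e v (c i) == ((val i == val j) || (val i == (val j).+1 %% 5))]].

Definition setXC5 (T : finType) (e : rel T) (c : 'I_5 -> T) : {set T} :=
  \bigcup_(j : 'I_5) setX_j e c j.

(* A vertex u of R is anticomplete to C, so if u were non-adjacent to a vertex w outside C
   that misses two non-adjacent vertices p, q of C, then {u, w, p, q} would be a stable set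
   of size four.  A vertex of R misses all of C, and a vertex of X_j misses the non-adjacent
   pair j+2, j+4; hence only 4K_1-freeness is needed. *)
From mathcomp Require Import all_boot.

Lemma fourK1_of_stable (T : finType) (e : rel T) (a b c d : T) :
  uniq [:: a; b; c; d] ->
  {in [:: a; b; c; d] &, forall x y, ~~ e x y} -> has_induced e fourK1.
Proof.
move=> uniq_abcd stable_abcd.
exists (fun i : 'I_4 => nth a [:: a; b; c; d] i); split=> [i j /eqP|i j].
  by rewrite nth_uniq ?ltn_ord // => /eqP/val_inj.
by apply/negbTE/stable_abcd; apply: mem_nth; rewrite ltn_ord.
Qed.

Definition c5arc (j k : 'I_5) : bool := (val k == val j) || (val k == (val j).+1 %% 5).

Lemma c5arc_opposite_pair (j : 'I_5) :
  exists p q : 'I_5, [/\ p != q, ~~ c5adj p q, ~~ c5arc j p & ~~ c5arc j q].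
Proof.
pose o k (k5 : k < 5) := Ordinal k5.
case: j => -[|[|[|[|[|//]]]]] j5;
  [ exists (o 2 isT), (o 4 isT) | exists (o 3 isT), (o 0 isT) | exists (o 4 isT), (o 1 isT)
  | exists (o 0 isT), (o 2 isT) | exists (o 1 isT), (o 3 isT) ]; by [].
Qed.

Section AnticompleteToC5.

Variables (T : finType) (e : rel T) (c : 'I_5 -> T).
Hypotheses (e_sym : symmetric e) (e_irr : irreflexive e).
Hypothesis fourK1_free : ~ has_induced e fourK1.
Hypothesis C5_c : induced_C5 e c.

Lemma setRC5_adj (u w : T) (p q : 'I_5) :
  u \in setRC5 e c -> outside c w -> u != w -> p != q -> ~~ c5adj p q ->
  ~~ e w (c p) -> ~~ e w (c q) -> e u w.
Proof.
case: C5_c => c_inj c_adj.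
rewrite inE => /andP[/forallP u_out /forallP u_anti] /forallP w_out.
move=> neq_uw neq_pq nadj_pq w_p w_q; apply/negPn/negP => u_w.
apply: fourK1_free; apply: (@fourK1_of_stable _ _ u w (c p) (c q)).
  rewrite /= !inE !negb_or neq_uw (inj_eq c_inj) neq_pq.
  by rewrite ![_ == c _]eq_sym !u_out !w_out.
have nadj_cpq : ~~ e (c p) (c q) by rewrite c_adj.
by move=> x y; rewrite !inE => /or4P[]/eqP-> /or4P[]/eqP->;
  rewrite ?e_irr // ?u_anti // 1?e_sym ?u_anti.
Qed.

Lemma setRC5_clique (u v : T) :
  u \in setRC5 e c -> v \in setRC5 e c -> u != v -> e u v.
Proof.
move=> Ru Rv neq_uv; move: (Rv); rewrite inE => /andP[v_out /forallP v_anti].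
by apply: (@setRC5_adj u v (Ordinal (isT : 0 < 5)) (Ordinal (isT : 2 < 5))).
Qed.

Lemma setRC5_setX_j_adj (j : 'I_5) (u x : T) :
  u \in setRC5 e c -> x \in setX_j e c j -> e u x.
Proof.
move=> Ru; rewrite inE => /andP[x_out /forallP x_nbr].
have x_c k : e x (c k) = c5arc j k by apply/eqP/x_nbr.
have neq_ux : u != x.
  apply: contraTneq Ru => ->; rewrite inE negb_and; apply/orP; right.
  by rewrite negb_forall; apply/existsP; exists j; rewrite x_c /c5arc eqxx.
have [p [q [neq_pq nadj_pq p_off q_off]]] := c5arc_opposite_pair j.
by apply: (@setRC5_adj u x p q Ru x_out neq_ux neq_pq nadj_pq); rewrite x_c.
Qed.

End AnticompleteToC5.

Theorem mainTheorem12 (T : finType) (e : rel T) (c : 'I_5 -> T) :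
  in_class e -> connected_graph e -> induced_C5 e c ->
  (forall u v, u \in setRC5 e c -> v \in setRC5 e c -> u != v -> e u v) /\
  (forall u x, u \in setRC5 e c -> x \in setXC5 e c -> e u x).
Proof.
move=> [[e_sym e_irr] [_ [fourK1_free _]]] _ C5_c; split.
  exact: setRC5_clique.
by move=> u x Ru /bigcupP[j _]; apply: setRC5_setX_j_adj.
Qed.
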